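(* There is no line $\ell$ of $\mathrm{PG}(3,q)$ with plane orbit distribution $OD_2(\ell)=[1,0,0,d_2,e_2]$ with $d_2\ge 1$.
   Context: Let $q$ be a power of a prime $p\neq 2,3$. In $\mathrm{PG}(3,q)$ with coordinates $(Y_0,\dots,Y_3)$, the twisted cubic is $\mathcal{C}=\{(1,t,t^2,t^3):t\in\mathbb{F}_q\}\cup\{(0,0,0,1)\}$. Osculating planes: $\Pi(t):-t^3Y_0+3t^2Y_1-3tY_2+Y_3=0$ ($t\in\mathbb{F}_q$), $\Pi(\infty):Y_0=0$. Plane classes: $\mathcal{H}_1$ = osculating planes; $\mathcal{H}_2$ = planes meeting $\mathcal{C}$ in exactly two points; $\mathcal{H}_3$ = planes meeting $\mathcal{C}$ in exactly three points; $\mathcal{H}_4$ = non-osculating planes meeting $\mathcal{C}$ in exactly one point; $\mathcal{H}_5$ = planes disjoint from $\mathcal{C}$. $OD_2(\ell)=[a_2,b_2,c_2,d_2,e_2]$ lists the numbers of planes through $\ell$ in $\mathcal{H}_1,\dots,\mathcal{H}_5$ respectively. *)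

From HB Require Import structures.
From mathcomp Require Import all_boot all_order all_algebra all_field.
Set Implicit Arguments. Unset Strict Implicit. Unset Printing Implicit Defensive.
Import GRing.Theory.
Local Open Scope ring_scope.

(* Points and planes are represented by nonzero row vectors 'rV[F]_4;
   a projective point/plane is counted once via its normalized
   representative (first nonzero coordinate equal to 1). *)

Section PG3.
Variable F : finFieldType.

(* incidence: plane a contains point x *)
Definition dot4 (a x : 'rV[F]_4) : F := \sum_(i < 4) a 0 i * x 0 i.

Definition normalized (a : 'rV[F]_4) : bool :=
  [exists i : 'I_4, (a 0 i == 1) && [forall j : 'I_4, (j < i)%N ==> (a 0 j == 0)]].

Definition cubicPt (t : option F) : 'rV[F]_4 :=
  match t with
  | Some t => \row_(i < 4) [:: 1; t; t ^+ 2; t ^+ 3]`_i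
  | None => \row_(i < 4) [:: 0; 0; 0; 1]`_i
  end.

Definition oscPlane (t : option F) : 'rV[F]_4 :=
  match t with
  | Some t => \row_(i < 4) [:: - t ^+ 3; 3%:R * t ^+ 2; - (3%:R * t); 1]`_i
  | None => \row_(i < 4) [:: 1; 0; 0; 0]`_i
  end.

Definition nmeet (a : 'rV[F]_4) : nat :=
  #|[set t : option F | dot4 a (cubicPt t) == 0]|.

Definition inH1 (a : 'rV[F]_4) : bool :=
  [exists t : option F, exists c : F, a == c *: oscPlane t].
Definition inH2 (a : 'rV[F]_4) : bool := nmeet a == 2%N.
Definition inH3 (a : 'rV[F]_4) : bool := nmeet a == 3%N.
Definition inH4 (a : 'rV[F]_4) : bool := ~~ inH1 a && (nmeet a == 1%N).
Definition inH5 (a : 'rV[F]_4) : bool := nmeet a == 0%N.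

(* a line is the row space of a rank-2 matrix L : 'M_(2,4);
   the plane a contains the line iff it contains both spanning points *)
Definition planeThrough (L : 'M[F]_(2,4)) (a : 'rV[F]_4) : bool :=
  L *m a^T == 0.

Definition countPlanes (L : 'M[F]_(2,4)) (P : 'rV[F]_4 -> bool) : nat :=
  #|[set a : 'rV[F]_4 | [&& normalized a, planeThrough L a & P a]]|.

Definition OD2 (L : 'M[F]_(2,4)) : seq nat :=
  [:: countPlanes L inH1; countPlanes L inH2; countPlanes L inH3;
      countPlanes L inH4; countPlanes L inH5].

End PG3.

From HB Require Import structures.
From mathcomp Require Import all_boot all_order all_algebra all_field.
From mathcomp Require Import ring zify.
Set Implicit Arguments. Unset Strict Implicit. Unset Printing Implicit Defensive.
Import GRing.Theory.
Local Open Scope ring_scope.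

(* Let L be a line lying in exactly one osculating plane Pi(t0) and in no   *)
(* plane meeting the twisted cubic C in two or three points.  (This already *)
(* ) *)
(* Choose a second plane b through L vanishing at a point of C other than  *)
(* t0.  In an affine coordinate Z on C \ {t0} sending t0 to infinity, the  *)
(* ratio b / Pi(t0) is a cubic f(Z) = alpha Z^3 + beta Z^2 + gamma Z.       *)
(* Since each plane b - lambda Pi(t0) of the pencil meets C at most once,  *)
(* f is injective and alpha != 0.  If beta^2 = 3 alpha gamma, f is a cube  *)
(* up to a constant and some plane of the pencil is a second osculating   *)
(* plane; otherwise the norm form x^2 + xy + y^2 (which is universal over *)
(* a finite field of characteristic != 2, 3) yields X != Y with f X = f Y. *)

Section FiniteFieldEquations.
Variable F : finFieldType.
Hypothesis two : (2%:R : F) != 0.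

(* Squaring is at most two-to-one and 0 has a single square root, so the   *)
(* squares fill more than half of F (counted via x |-> (x^2, "x before -x")). *)
Lemma card_squares : (#|F| < 2 * #|[set x ^+ 2 | x : F]|)%N.
Proof.
set S := [set x ^+ 2 | x : F].
pose f (x : F) := (x ^+ 2, enum_rank x < enum_rank (- x))%N.
have f_inj : injective f.
  move=> x y [] /eqP; rewrite -subr_eq0 subr_sqr mulf_eq0 subr_eq0.
  case/orP=> [/eqP //|]; rewrite addr_eq0 => /eqP -> /=.
  have [-> | y_nz] := eqVneq y 0; first by rewrite oppr0.
  have : nat_of_ord (enum_rank (- y)) != enum_rank y.
    apply/eqP => /val_inj/enum_rank_inj/eqP.
    by rewrite eq_sym -addr_eq0 -mulr2n -mulr_natr mulf_eq0 (negPf y_nz) (negPf two).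
  rewrite opprK; case: ltngtP => //; case: ltngtP => //; lia.
have f_img : [set f x | x in F] \subset setX S [set: bool] :\ (0, true).
  apply/subsetP => _ /imsetP[x _ ->]; rewrite !inE /f /= andbT.
  apply/andP; split; last by apply/imsetP; exists x.
  by apply/eqP => -[/eqP]; rewrite sqrf_eq0 => /eqP ->; rewrite oppr0 ltnn.
have := subset_leq_card f_img; rewrite card_imset //.
have S0 : (0 : F) \in S by apply/imsetP; exists 0; rewrite ?expr0n.
have := cardsD1 (0 : F, true) (setX S [set: bool]).
rewrite !inE S0 cardsX cardsT card_bool /= mulnC => ->.
by rewrite add1n ltnS.
Qed.

(* Every element is represented by the form X^2 + e Y^2 (e != 0): the sets *)
(* {X^2} and {d - e Y^2} are too large to be disjoint.                    *)
Lemma binary_form_surj (e d : F) : e != 0 -> exists X Y, X ^+ 2 + e * Y ^+ 2 = d.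
Proof.
move=> e_nz; set S := [set x ^+ 2 | x : F]; set T := [set d - e * z | z in S].
have cardT : #|T| = #|S|.
  by rewrite card_imset // => z1 z2 /(canLR (subKr d))/esym; rewrite subKr => /(mulfI e_nz).
have := cardsUI S T; have := card_squares; rewrite -/S.
have : (#|S :|: T| <= #|F|)%N by rewrite -cardsT subset_leq_card ?subsetT.
case: (set_0Vmem (S :&: T)) => [-> | [w]]; first by rewrite cards0 cardT; lia.
rewrite inE => /andP[/imsetP[X _ ->] /imsetP[z /imsetP[Y _ ->] E]] _ _ _.
by exists X, Y; rewrite E subrK.
Qed.

Hypothesis three : (3%:R : F) != 0.

(* The norm form x^2 + xy + y^2 of F(cube roots of 1) takes every nonzero *)
(* value at a pair x != y: complete the square and use binary_form_surj.  *)
Lemma norm_form_distinct (c : F) : c != 0 ->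
  exists x y : F, x != y /\ x ^+ 2 + x * y + y ^+ 2 = c.
Proof.
move=> c_nz; have [X [Y XY]] := binary_form_surj (4%:R * c) three.
have four : (4%:R : F) != 0 by rewrite (natrM _ 2 2) mulf_neq0.
set x := (X - Y) / 2%:R.
have x_sol : x ^+ 2 + x * Y + Y ^+ 2 = c.
  by apply: (mulfI four); rewrite -XY /x; field.
(* if the solution has x = Y, then 3 Y^2 = c and (-2Y, Y) works as well *)
have [xY | xY] := eqVneq x Y; last by exists x, Y.
exists (- 2%:R * Y), Y; split; last by rewrite -x_sol xY; ring.
apply: contra c_nz => /eqP Y3; have : 3%:R * Y = Y - (- 2%:R * Y) by ring.
rewrite Y3 subrr => /eqP; rewrite mulf_eq0 (negPf three) /= => /eqP Y0.
by rewrite -x_sol xY Y0 expr0n mulr0 !addr0.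
Qed.

(* A cubic alpha Z^3 + beta Z^2 + gamma Z with beta^2 != 3 alpha gamma is    *)
(* never injective on F: f X - f Y = (X - Y)(alpha(X^2+XY+Y^2) + beta(X+Y) + gamma), *)
(* and the second factor has a zero with X != Y after a translation.       *)
Lemma cubic_collision (alpha beta gamma : F) :
  alpha != 0 -> beta ^+ 2 != 3%:R * alpha * gamma ->
  exists X Y : F, X != Y /\
    alpha * X ^+ 3 + beta * X ^+ 2 + gamma * X = alpha * Y ^+ 3 + beta * Y ^+ 2 + gamma * Y.
Proof.
move=> a_nz disc_nz; set h := beta / (3%:R * alpha).
have c_nz : (beta ^+ 2 - 3%:R * alpha * gamma) / (3%:R * alpha ^+ 2) != 0.
  by rewrite mulf_neq0 ?invr_eq0 ?mulf_neq0 ?expf_neq0 // subr_eq0.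
have [x [y [xy E]]] := norm_form_distinct c_nz.
exists (x - h), (y - h); split; first by apply: contra xy => /eqP/addIr ->.
apply/eqP; rewrite -subr_eq0; apply/eqP.
transitivity ((x - y) * alpha * (x ^+ 2 + x * y + y ^+ 2
  - (beta ^+ 2 - 3%:R * alpha * gamma) / (3%:R * alpha ^+ 2))).
  by rewrite /h; field; rewrite three a_nz.
by rewrite E subrr mulr0.
Qed.

End FiniteFieldEquations.

Section PlanesAndTheCubic.
Variable F : finFieldType.
Implicit Types (a b x : 'rV[F]_4) (L : 'M[F]_(2,4)).

(* the four coordinate indices, in the form produced by big_ord_recl *)
Definition i0 : 'I_4 := ord0.
Definition i1 : 'I_4 := lift ord0 (ord0 : 'I_3).
Definition i2 : 'I_4 := lift ord0 (lift ord0 (ord0 : 'I_2)).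
Definition i3 : 'I_4 := lift ord0 (lift ord0 (lift ord0 (ord0 : 'I_1))).

Lemma dot_cubic_Some a t :
  dot4 a (cubicPt (Some t)) = a 0 i0 + a 0 i1 * t + a 0 i2 * t ^+ 2 + a 0 i3 * t ^+ 3.
Proof. by rewrite /dot4 !big_ord_recl big_ord0 addr0 !addrA !mxE /= mulr1. Qed.

Lemma dot_cubic_None a : dot4 a (cubicPt None) = a 0 i3.
Proof. by rewrite /dot4 !big_ord_recl big_ord0 !mxE /= !mulr0 mulr1 !add0r addr0. Qed.

Lemma dotD a b x : dot4 (a + b) x = dot4 a x + dot4 b x.
Proof. by rewrite /dot4 -big_split; apply: eq_bigr => i _; rewrite mxE mulrDl. Qed.

Lemma dotZ (k : F) a x : dot4 (k *: a) x = k * dot4 a x.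
Proof. by rewrite /dot4 mulr_sumr; apply: eq_bigr => i _; rewrite mxE mulrA. Qed.

(* Incidence as a matrix product, to use the rank theory of mxalgebra. *)
Lemma dot_mx a x : dot4 a x = (x *m a^T) 0 0.
Proof. by rewrite mxE; apply: eq_bigr => i _; rewrite mxE mulrC. Qed.

Lemma osc_Some_Some (s t : F) : dot4 (oscPlane (Some s)) (cubicPt (Some t)) = (t - s) ^+ 3.
Proof. by rewrite dot_cubic_Some !mxE /=; ring. Qed.

Lemma osc_Some_None (s : F) : dot4 (oscPlane (Some s)) (cubicPt None) = 1.
Proof. by rewrite dot_cubic_None mxE. Qed.

Lemma osc_None_Some (t : F) : dot4 (oscPlane None) (cubicPt (Some t)) = 1.
Proof. by rewrite dot_cubic_Some !mxE /=; ring. Qed.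

Lemma osc_None_None : dot4 (oscPlane None) (cubicPt None) = 0 :> F.
Proof. by rewrite dot_cubic_None mxE. Qed.

Lemma osc_root (s t : option F) : dot4 (oscPlane s) (cubicPt t) = 0 -> t = s.
Proof.
case: s t => [s|] [t|];
  rewrite ?osc_Some_Some ?osc_Some_None ?osc_None_Some ?osc_None_None //;
  try by move/eqP; rewrite oner_eq0.
by move/eqP; rewrite expf_eq0 subr_eq0 => /andP[_ /eqP ->].
Qed.

(* Pi(s) vanishes on the cubic only at s, so it is not the zero vector. *)
Lemma oscPlane_neq0 (s : option F) : oscPlane s != 0 :> 'rV[F]_4.
Proof.
apply/eqP => s0; have vanish t : t = s.
  by apply: osc_root; rewrite s0 /dot4 big1 // => i _; rewrite mxE mul0r.
by have := vanish None; rewrite -(vanish (Some 0)).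
Qed.

Lemma nmeet_scale (k : F) a : k != 0 -> nmeet (k *: a) = nmeet a.
Proof.
by move=> k_nz; apply: eq_card => t; rewrite !inE dotZ mulf_eq0 (negPf k_nz).
Qed.

Lemma nmeet_ge2 a (s u : option F) : s != u ->
  dot4 a (cubicPt s) = 0 -> dot4 a (cubicPt u) = 0 -> (2 <= nmeet a)%N.
Proof.
move=> su as0 au0; have <- : #|[set s; u]| = 2%N by rewrite cards2 su.
apply: subset_leq_card.
by apply/subsetP => t; rewrite !inE => /orP[] /eqP ->; rewrite ?as0 ?au0.
Qed.

(* A plane meets the cubic in at most three points: its restriction is a   *)
(* nonzero polynomial of degree <= 3, of degree <= 2 if it contains (0,0,0,1). *)
Lemma nmeet_le3 a : a != 0 -> (nmeet a <= 3)%N.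
Proof.
move=> a_nz; pose p : {poly F} := \poly_(i < 4) a 0 (inord i).
have p_coef (j : 'I_4) : p`_j = a 0 j by rewrite coef_poly ltn_ord inord_val.
have p_val t : dot4 a (cubicPt (Some t)) = p.[t].
  rewrite (horner_coef_wide _ (size_poly _ _)) (eq_bigr (fun i : 'I_4 => a 0 i * t ^+ i)).
    by rewrite dot_cubic_Some !big_ord_recl big_ord0 /= expr1 mulr1 addr0 !addrA.
  by move=> i _; rewrite p_coef.
have p_nz : p != 0.
  by apply: contra a_nz => /eqP p0; apply/eqP/rowP => j; rewrite mxE -p_coef p0 coef0.
set R := [set x : F | root p x].
have cardR : (#|R| < size p)%N.
  rewrite cardE; apply: max_poly_roots p_nz _ (enum_uniq _).
  by apply/allP => x; rewrite mem_enum inE.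
have meet_sub : [set t | dot4 a (cubicPt t) == 0] \subset
                [set t | (t == None) && (a 0 i3 == 0)] :|: [set Some x | x in R].
  apply/subsetP => -[t|]; rewrite !inE ?dot_cubic_None ?p_val => t0; last by rewrite t0.
  by apply/orP; right; apply/imsetP; exists t; rewrite ?inE.
apply: leq_trans (subset_leq_card meet_sub) _; rewrite cardsU; apply: leq_trans (leq_subr _ _) _.
rewrite card_imset; last exact: Some_inj.
have [a3 | a3] := eqVneq (a 0 i3) 0; last first.
  rewrite (eq_card0 (A := [set t | _ && false])) => [|t]; last by rewrite inE andbF.
  by have : (size p <= 4)%N := size_poly _ _; lia.
have -> : #|[set t : option F | (t == None) && true]| = 1%N.
  by apply/eqP/cards1P; exists None; apply/setP => t; rewrite !inE andbT.
have : (size p <= 3)%N.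
  apply/leq_sizeP => j j3; rewrite coef_poly; case: ltnP => // j4.
  have -> : j = 3%N by lia.
  by rewrite (_ : inord 3 = i3) //; apply/val_inj; rewrite /= inordK.
lia.
Qed.

(* In odd characteristic the cubic has at least four points, so a plane   *)
(* is determined by its restriction to the cubic.                          *)
Lemma plane_vanishing_on_cubic a : (2%:R : F) != 0 ->
  (forall t, dot4 a (cubicPt t) = 0) -> a = 0.
Proof.
move=> two vanish; apply/eqP; apply: contraT => /nmeet_le3.
have -> : nmeet a = #|{: option F}| by apply: eq_card => t; rewrite !inE vanish eqxx.
rewrite card_option ltnS leqNgt => /negP[]; rewrite cardE.
apply: (uniq_leq_size (s1 := [:: 0; 1; -1])) => [|x]; last by rewrite mem_enum.
rewrite /= !inE eq_sym oner_eq0 eq_sym oppr_eq0 oner_eq0 -addr_eq0 -mulr2n.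
by rewrite -mulr_natr mul1r two.
Qed.

Lemma planeThroughD L a b : planeThrough L a -> planeThrough L b -> planeThrough L (a + b).
Proof. by rewrite /planeThrough linearD /= mulmxDr => /eqP -> /eqP ->; rewrite addr0. Qed.

Lemma planeThroughZ L (k : F) a : planeThrough L a -> planeThrough L (k *: a).
Proof. by rewrite /planeThrough linearZ /= -scalemxAr => /eqP ->; rewrite scaler0. Qed.

(* Through the line L and any further point x there is a plane: the        *)
(* 3 x 4 system [L; x] has a nonzero kernel vector.                        *)
Lemma plane_through_point L x :
  exists b : 'rV[F]_4, [/\ b != 0, planeThrough L b & dot4 b x = 0].
Proof.
set M := (col_mx L x)^T; have K_nz : kermx M != 0.
  rewrite -mxrank_eq0 mxrank_ker subn_eq0 -ltnNge.
  exact: leq_ltn_trans (rank_leq_col M) _.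
have [i row_nz] : exists i, row i (kermx M) != 0.
  apply/existsP; apply: contraR K_nz => /existsPn rows0.
  by apply/eqP/row_matrixP => i; rewrite row0; apply/eqP; have := rows0 i; rewrite negbK.
have : col_mx L x *m (row i (kermx M))^T = 0.
  by rewrite -[col_mx L x]trmxK -trmx_mul -row_mul mulmx_ker row0 trmx0.
rewrite mul_col_mx => /eqP; rewrite col_mx_eq0 => /andP[L0 /eqP x0].
by exists (row i (kermx M)); rewrite /planeThrough L0 dot_mx x0 mxE.
Qed.

Lemma normalize a : a != 0 -> exists k, k != 0 /\ normalized (k *: a).
Proof.
move=> a_nz; have [i ai] : exists i, a 0 i != 0.
  apply/existsP; apply: contraR a_nz => /existsPn coords0.
  by apply/eqP/rowP => i; rewrite mxE; apply/eqP; have := coords0 i; rewrite negbK.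
case: (arg_minnP (P := fun j => a 0 j != 0) (@nat_of_ord 4) ai) => j aj j_min.
exists (a 0 j)^-1; split; first by rewrite invr_eq0.
apply/existsP; exists j; rewrite mxE mulVf // eqxx /=.
apply/forallP => i'; apply/implyP => i'j; rewrite mxE mulf_eq0; apply/orP; right.
by apply: contraLR i'j => /j_min; rewrite -leqNgt.
Qed.

Lemma normalized_neq0 a : normalized a -> a != 0.
Proof.
by case/existsP => i /andP[ai _]; apply: contraTneq ai => ->; rewrite mxE eq_sym oner_eq0.
Qed.

Definition scale_invariant (P : 'rV[F]_4 -> bool) :=
  forall (k : F) a, k != 0 -> P (k *: a) = P a.

Lemma inH1_scale : scale_invariant (@inH1 F).
Proof.
move=> k a k_nz; apply/existsP/existsP => -[t /existsP[c /eqP E]]; exists t; apply/existsP.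
  by exists (k^-1 * c); rewrite -scalerA -E scalerA mulVf ?scale1r.
by exists (k * c); rewrite E scalerA.
Qed.

Lemma nmeet_class_scale (n : nat) : scale_invariant (fun a => nmeet a == n).
Proof. by move=> k a k_nz; rewrite nmeet_scale. Qed.

Section CountingPlanesThroughALine.
Variables (L : 'M[F]_(2,4)) (P : 'rV[F]_4 -> bool).
Hypothesis P_scale : scale_invariant P.

Lemma count0_excludes a :
  countPlanes L P = 0%N -> a != 0 -> planeThrough L a -> ~~ P a.
Proof.
move=> /eqP; rewrite cards_eq0 => /eqP none a_nz La.
have [k [k_nz k_norm]] := normalize a_nz; rewrite -(P_scale a k_nz).
apply/negP => Pka; have : k *: a \in set0 by rewrite -none inE k_norm planeThroughZ.
by rewrite inE.
Qed.

Lemma count1_proportional a a' :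
  countPlanes L P = 1%N -> a != 0 -> a' != 0 -> planeThrough L a -> planeThrough L a' ->
  P a -> P a' -> exists k : F, a' = k *: a.
Proof.
move=> /eqP/cards1P[a0 single] a_nz a'_nz La La' Pa Pa'.
have [k [k_nz k_norm]] := normalize a_nz; have [k' [k'_nz k'_norm]] := normalize a'_nz.
have in_single b : normalized b -> planeThrough L b -> P b -> b = a0.
  by move=> *; apply/set1P; rewrite -single inE; apply/and3P.
have := in_single _ k'_norm (planeThroughZ k' La') (etrans (P_scale _ k'_nz) Pa').
rewrite -(in_single _ k_norm (planeThroughZ k La) (etrans (P_scale _ k_nz) Pa)) => E.
by exists (k'^-1 * k); rewrite -scalerA -E scalerA mulVf ?scale1r.
Qed.

Lemma count1_witness : countPlanes L P = 1%N ->
  exists a, [/\ a != 0, planeThrough L a & P a].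
Proof.
move=> /eqP/cards1P[a0 single].
have : a0 \in [set a | [&& normalized a, planeThrough L a & P a]] by rewrite single set11.
by rewrite inE => /and3P[/normalized_neq0 a0_nz L_a0 P_a0]; exists a0.
Qed.

End CountingPlanesThroughALine.

Lemma osc_through_line L : countPlanes L (@inH1 F) = 1%N ->
  exists t0, planeThrough L (oscPlane t0).
Proof.
case/count1_witness => a [a_nz L_a /existsP[t0 /existsP[c /eqP aE]]]; exists t0.
have c_nz : c != 0 by apply: contraNneq a_nz => c0; rewrite aE c0 scale0r.
by have := planeThroughZ c^-1 L_a; rewrite aE scalerA mulVf ?scale1r.
Qed.

(* An affine coordinate Z on the cubic minus the point t0, obtained from a  *)
(* projectivity of the parameter line sending t0 to infinity; in it the   *)
(* osculating plane Pi(t0) plays the role of the plane at infinity.        *)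
Definition chart (t0 : option F) (Z : F) : option F :=
  if t0 is Some s then (if Z == 0 then None else Some (s + Z^-1)) else Some Z.

Lemma chart_inj (t0 : option F) : injective (chart t0).
Proof.
case: t0 => [s|] X Y /=; last by case.
have [-> | _] := eqVneq X 0; have [-> | _] := eqVneq Y 0; try congruence.
by case=> /addrI/invr_inj.
Qed.

Lemma chart_neq (t0 : option F) Z : chart t0 Z != t0.
Proof.
case: t0 => [s|] //=; have [// | Z_nz] := eqVneq Z 0.
apply/eqP => -[]; rewrite -{2}[s]addr0 => /addrI/eqP; by rewrite invr_eq0 (negPf Z_nz).
Qed.

Lemma chart_cover (t0 t : option F) : t != t0 -> exists Z, t = chart t0 Z.
Proof.
case: t0 t => [s|] [u|] //= ut0; last by exists u.
  have us : u != s by apply: contraNneq ut0 => ->.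
  by exists (u - s)^-1; rewrite invr_eq0 subr_eq0 (negPf us) invrK subrKC.
by exists 0; rewrite eqxx.
Qed.

Lemma osc_self (t0 : option F) : dot4 (oscPlane t0) (cubicPt t0) = 0.
Proof. by case: t0 => [s|]; rewrite ?osc_Some_Some ?osc_None_None // subrr expr0n. Qed.

Lemma osc_chart_neq0 (t0 : option F) Z : dot4 (oscPlane t0) (cubicPt (chart t0 Z)) != 0.
Proof. by apply/eqP => /osc_root/eqP; rewrite (negPf (chart_neq t0 Z)). Qed.

Lemma chart_coords (t0 : option F) b : exists alpha beta gamma delta : F,
  dot4 b (cubicPt t0) = alpha /\ forall Z,
  dot4 b (cubicPt (chart t0 Z)) = (alpha * Z ^+ 3 + beta * Z ^+ 2 + gamma * Z + delta)
                                  * dot4 (oscPlane t0) (cubicPt (chart t0 Z)).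
Proof.
case: t0 => [s|]; last first.
  exists (b 0 i3), (b 0 i2), (b 0 i1), (b 0 i0); split => [|Z]; first exact: dot_cubic_None.
  by rewrite osc_None_Some dot_cubic_Some; ring.
exists (dot4 b (cubicPt (Some s))), (b 0 i1 + 2%:R * b 0 i2 * s + 3%:R * b 0 i3 * s ^+ 2),
  (b 0 i2 + 3%:R * b 0 i3 * s), (b 0 i3); split => // Z /=.
case: eqP => [->|/eqP Z_nz]; first by rewrite osc_Some_None dot_cubic_None; ring.
by rewrite osc_Some_Some !dot_cubic_Some; field.
Qed.

Lemma chart_osc (t0 : option F) (k : F) : exists (t1 : option F) (c : F),
  [/\ t1 != t0, c != 0, dot4 (oscPlane t1) (cubicPt t0) = c & forall Z,
    dot4 (oscPlane t1) (cubicPt (chart t0 Z))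
    = c * (Z + k) ^+ 3 * dot4 (oscPlane t0) (cubicPt (chart t0 Z))].
Proof.
case: t0 => [s|]; last first.
  exists (Some (- k)), 1; split => [||| Z] //; rewrite ?oner_eq0 ?osc_Some_None //.
  by rewrite osc_Some_Some osc_None_Some; ring.
have [-> | k_nz] := eqVneq k 0.
  exists None, 1; split => [||| Z] //; rewrite ?oner_eq0 ?osc_None_Some //= addr0.
  case: eqP => [->|/eqP Z_nz]; first by rewrite osc_None_None osc_Some_None; ring.
  by rewrite osc_None_Some osc_Some_Some; field.
exists (Some (s - k^-1)), (k ^- 3); split => [||| Z].
- by apply/eqP => -[] /eqP; rewrite subr_eq addrC -subr_eq subrr eq_sym invr_eq0 (negPf k_nz).
- by rewrite invr_eq0 expf_neq0.
- by rewrite osc_Some_Some opprB addrC subrK exprVn.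
rewrite /=; case: eqP => [->|/eqP Z_nz]; first by rewrite !osc_Some_None; field.
by rewrite !osc_Some_Some; field; rewrite Z_nz.
Qed.

End PlanesAndTheCubic.

Section PencilThroughAnOsculatingPlane.
Variables (F : finFieldType) (L : 'M[F]_(2,4)) (t0 : option F).
Hypotheses (two : (2%:R : F) != 0) (three : (3%:R : F) != 0).
Hypotheses (one_osc : countPlanes L (@inH1 F) = 1%N)
  (no_H2 : countPlanes L (@inH2 F) = 0%N) (no_H3 : countPlanes L (@inH3 F) = 0%N).
Hypothesis L_osc : planeThrough L (oscPlane t0).

Local Notation o := (oscPlane t0).
Local Notation val w t := (dot4 w (cubicPt t)).

Lemma no_secant_plane w s u : w != 0 -> planeThrough L w -> s != u ->
  val w s = 0 -> val w u = 0 -> False.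
Proof.
move=> w_nz Lw su ws wu; have := nmeet_le3 w_nz; have := nmeet_ge2 su ws wu.
have := count0_excludes (@nmeet_class_scale F 2) no_H2 w_nz Lw.
have := count0_excludes (@nmeet_class_scale F 3) no_H3 w_nz Lw.
by rewrite /inH2 /inH3; case: (nmeet w) => [|[|[|[|]]]].
Qed.

Lemma osc_through_L t1 : planeThrough L (oscPlane t1) -> t1 = t0.
Proof.
move=> L_osc1; have isH1 (t : option F) : inH1 (oscPlane t).
  by apply/existsP; exists t; apply/existsP; exists 1; rewrite scale1r.
have [k osc1E] := count1_proportional (@inH1_scale F) one_osc (oscPlane_neq0 t0)
  (oscPlane_neq0 t1) L_osc L_osc1 (isH1 t0) (isH1 t1).
have k_nz : k != 0 by apply: contraNneq (oscPlane_neq0 t1) => k0; rewrite osc1E k0 scale0r.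
apply: osc_root; apply/eqP; rewrite -(mulIr_eq0 _ (mulIf k_nz)) mulrC -dotZ -osc1E.
by rewrite osc_self.
Qed.

Section SecondPlane.

Variables (b : 'rV[F]_4) (alpha beta gamma : F).
Hypotheses (b_nz : b != 0) (L_b : planeThrough L b) (b_t0 : val b t0 = alpha).
Let f Z := alpha * Z ^+ 3 + beta * Z ^+ 2 + gamma * Z.
Hypothesis b_chart : forall Z, val b (chart t0 Z) = f Z * val o (chart t0 Z).

Lemma ratio_at0 : f 0 = 0.
Proof. by rewrite /f; ring. Qed.

Lemma pencil_member_neq0 (lambda : F) : b - lambda *: o != 0.
Proof.
apply: contraNneq b_nz => /eqP; rewrite subr_eq0 => /eqP bE.
have := b_chart 0; rewrite ratio_at0 mul0r bE dotZ => /eqP.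
by rewrite mulf_eq0 (negPf (osc_chart_neq0 t0 0)) orbF => /eqP ->; rewrite scale0r.
Qed.

Lemma pencil_member_chart (lambda : F) Z :
  val (b - lambda *: o) (chart t0 Z) = (f Z - lambda) * val o (chart t0 Z).
Proof. by rewrite dotD -scaleNr dotZ b_chart; ring. Qed.

(* alpha = b(t0) != 0, otherwise b meets the cubic at t0 and at Z = 0. *)
Lemma lead_coef_neq0 : alpha != 0.
Proof.
apply/negP => /eqP alpha0; apply: (no_secant_plane b_nz L_b (chart_neq t0 0)).
- by rewrite b_chart ratio_at0 mul0r.
- by rewrite b_t0.
Qed.

(* f is injective: two points with the same value lie on a common plane of *)
(* the pencil.                                                             *)
Lemma ratio_injective X Y : f X = f Y -> X = Y.
Proof.
move=> fXY; apply/eqP; apply: contraT => XY; exfalso.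
have chartXY : chart t0 X != chart t0 Y by apply: contra_neq XY; apply: chart_inj.
apply: (no_secant_plane (pencil_member_neq0 (f X)) _ chartXY).
- by apply: planeThroughD => //; rewrite -scaleNr; apply: planeThroughZ.
- by rewrite pencil_member_chart subrr mul0r.
- by rewrite pencil_member_chart fXY subrr mul0r.
Qed.

(* If beta^2 = 3 alpha gamma then f + alpha k^3 = alpha (Z + k)^3 is a cube, *)
(* and the corresponding plane of the pencil is a second osculating plane. *)
Lemma ratio_not_a_cube : beta ^+ 2 != 3%:R * alpha * gamma.
Proof.
apply/negP => /eqP disc; have alpha_nz := lead_coef_neq0.
set k := beta / (3%:R * alpha); set w := b - (- (alpha * k ^+ 3)) *: o.
have w_chart Z : val w (chart t0 Z) = alpha * (Z + k) ^+ 3 * val o (chart t0 Z).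
  rewrite pencil_member_chart /f; congr (_ * _).
  have -> : gamma = beta ^+ 2 / (3%:R * alpha) by rewrite disc; field; rewrite three alpha_nz.
  by rewrite /k; field; rewrite three alpha_nz.
have [t1 [c [t1t0 c_nz osc1_t0 osc1_chart]]] := chart_osc t0 k.
have wE : w = (alpha / c) *: oscPlane t1.
  apply/eqP; rewrite -subr_eq0; apply/eqP/plane_vanishing_on_cubic => // t.
  rewrite dotD -scaleNr dotZ; have [-> | /chart_cover[Z ->]] := eqVneq t t0.
    by rewrite dotD -scaleNr dotZ osc_self b_t0 osc1_t0; field.
  by rewrite w_chart osc1_chart; field.
have : planeThrough L (oscPlane t1).
  have -> : oscPlane t1 = (c / alpha) *: w.
    by rewrite wE scalerA (_ : c / alpha * (alpha / c) = 1) ?scale1r //; field; rewrite c_nz.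
  by apply/planeThroughZ/planeThroughD => //; rewrite -scaleNr; apply: planeThroughZ.
by move/osc_through_L/eqP; rewrite (negPf t1t0).
Qed.

End SecondPlane.

Lemma pencil_contradiction : False.
Proof.
have [b [b_nz L_b b_at0]] := plane_through_point L (cubicPt (chart t0 0)).
have [alpha [beta [gamma [delta [b_t0 b_chart]]]]] := chart_coords t0 b.
have delta0 : delta = 0.
  move: b_at0; rewrite b_chart (_ : alpha * 0 ^+ 3 + _ + _ + delta = delta) => [/eqP|].
    by rewrite mulf_eq0 (negPf (osc_chart_neq0 t0 0)) orbF => /eqP.
  by ring.
have {}b_chart Z : val b (chart t0 Z) =
    (alpha * Z ^+ 3 + beta * Z ^+ 2 + gamma * Z) * val o (chart t0 Z).
  by rewrite b_chart delta0 addr0.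
have [X [Y [XY fXY]]] := cubic_collision two three
  (lead_coef_neq0 b_nz L_b b_t0 b_chart) (ratio_not_a_cube b_nz L_b b_t0 b_chart).
by move: XY; rewrite (ratio_injective b_nz L_b b_chart fXY) eqxx.
Qed.

End PencilThroughAnOsculatingPlane.

Theorem mainTheorem9 (F : finFieldType)
  (h2 : 2%N \notin [pchar F]) (h3 : 3%N \notin [pchar F]) :
  ~ (exists (L : 'M[F]_(2,4)) (d e : nat),
       \rank L = 2%N /\ OD2 L = [:: 1%N; 0%N; 0%N; d; e] /\ (1 <= d)%N).
Proof.
move=> [L [d [e [_ [[one_osc no_H2 no_H3 _ _] _]]]]].
have two : (2%:R : F) != 0 by apply: contra h2 => two0; rewrite inE /= two0.
have three : (3%:R : F) != 0 by apply: contra h3 => three0; rewrite inE /= three0.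
have [t0 L_osc] := osc_through_line one_osc.
exact: (pencil_contradiction two three one_osc no_H2 no_H3 L_osc).
Qed.
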